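(* Let $q\in X^*\setminus\{e\}$ and let $\lambda_q$ be the largest positive real root of the polynomial $\mathfrak{p}_q(t):=t^{|q|}-\sum_{v\in\sqrt[*]{P_q}}t^{|q|-|v|}$. Then there are constants $c_{q,1},c_{q,2}>0$ such that for all $n\in\mathbb{N}$, $$c_{q,1}\lambda_q^n\le|\mathrm{infix}(Q_q)\cap X^n|\le c_{q,2}\lambda_q^n.$$
   Context: $X$ is a finite alphabet with $|X|\ge2$; $X^*$ the finite words (empty word $e$), $X^n$ the words of length $n$. $w\sqsubseteq\eta$ means $w$ is a prefix of $\eta$, $w\sqsubset\eta$ a proper prefix. $\mathrm{infix}(B)$ is the set of all finite factors (subwords) of words in $B$. A finite word $\eta$ is quasiperiodic with quasiperiod $q$ if for every natural number $j<|\eta|$ there is a prefix $u_j\sqsubseteq\eta$ with $j-|q|<|u_j|\le j$ and $u_j\cdot q\sqsubseteq\eta$; $Q_q$ is the set of such words (including $e$). $P_q:=\{v: e\sqsubset v\sqsubseteq q\sqsubset v\cdot q\}$, and $\sqrt[*]{P_q}:=P_q\setminus(P_q^2\cdot P_q^* )$ is its star root (elements of $P_q$ not a concatenation of two or more elements of $P_q$). *)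

From HB Require Import structures.
From mathcomp Require Import all_boot all_order all_algebra.
From Stdlib Require Import ClassicalEpsilon.
Set Implicit Arguments. Unset Strict Implicit. Unset Printing Implicit Defensive.
Import Order.TTheory GRing.Theory Num.Theory.

Definition decP (P : Prop) : bool :=
  if excluded_middle_informative P then true else false.

Section Words.
Variable X : finType.

Definition pprefix (w eta : seq X) : bool := prefix w eta && (size w < size eta).

(* Q_q : eta is quasiperiodic with quasiperiod q (the empty word included):
   for every j < |eta| there is a prefix u ⊑ eta with j - |q| < |u| <= j
   and u·q ⊑ eta.  (j - |q| < |u| is written j < |u| + |q| to avoid
   truncated subtraction on nat.) *)
Definition Qq (q eta : seq X) : Prop :=
  forall j : nat, j < size eta ->
    exists u : seq X, [/\ prefix u eta, j < size u + size q, size u <= j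
                        & prefix (u ++ q) eta].

Definition Pq (q v : seq X) : Prop :=
  [/\ pprefix [::] v, prefix v q & pprefix q (v ++ q)].

Definition Pq2star (q v : seq X) : Prop :=
  exists vs : seq (seq X), 2 <= size vs /\ (forall x, x \in vs -> Pq q x)
                           /\ v = flatten vs.

Definition starroot (q v : seq X) : Prop := Pq q v /\ ~ Pq2star q v.

Definition infixQ (q w : seq X) : Prop := exists eta, Qq q eta /\ infix w eta.

Definition infix_count (q : seq X) (n : nat) : nat :=
  #|[set w : n.-tuple X | decP (infixQ q (tval w))]|.

End Words.

Local Open Scope ring_scope.

(* Every element of P_q is a prefix of q (v ⊑ q), so the sum over the star
   root is written as a sum over the prefixes  take k q, k <= |q|
   (distinct k give distinct prefixes). *)
Definition pq (R : nzRingType) (X : finType) (q : seq X) : {poly R} :=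
  'X^(size q) -
  \sum_(k < (size q).+1 | decP (starroot q (take k q))) 'X^(size q - k).

Definition largest_pos_root (R : realFieldType) (p : {poly R}) (lam : R) : Prop :=
  [/\ 0 < lam, root p lam & forall mu : R, 0 < mu -> root p mu -> mu <= lam].

From Pilot Require Import Defs.
From HB Require Import structures.
From mathcomp Require Import all_boot all_order all_algebra zify ring.
From Stdlib Require Import ClassicalEpsilon.
Set Implicit Arguments. Unset Strict Implicit. Unset Printing Implicit Defensive.
Import Order.TTheory GRing.Theory Num.Theory.

(* Every nonempty word of Q_q is u·q with u a product of elements of the
   star root of P_q, and this factorisation is unique: a strictly shorter
   first factor would split the longer one into two elements of P_q.  So the
   numbers a_m of such products of length m obey the renewal recurrence
   a_m = sum_v a_(m-|v|), whose characteristic equation sum_v lam^-|v| = 1 is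
   p_q(lam) = 0.  The recurrence gives a_m <= lam^m, and the weighted window
   sums sum_v lam^-|v| sum_(m-|v| < i <= m) a_i lam^-i are constantly 1, so
   every window of |q| consecutive values a_i lam^-i sums to at least 1.
   Each product of length m yields a distinct factor of length n of a word of
   Q_q when m <= n <= m + |q|, and conversely every such factor is read off at
   a shift d <= |q| from a product of length within |q| of n + d: this gives
   both bounds. *)

Lemma decPP (P : Prop) : reflect P (Defs.decP P).
Proof. by rewrite /Defs.decP; case: excluded_middle_informative => h; constructor. Qed.

Section SeqFacts.
Variable T : eqType.
Implicit Types s u v w : seq T.

Lemma prefix_size_prefix u v w :
  prefix u w -> prefix v w -> size u <= size v -> prefix u v.
Proof.
by rewrite !prefixE => /eqP hu /eqP hv huv; rewrite -hv take_takel // hu.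
Qed.

Lemma prefix_drop_cat u s w : prefix (u ++ s) w = prefix u w && prefix s (drop (size u) w).
Proof.
apply/idP/andP => [/prefixP[t ->] | [/prefixP[t ->]]].
  by rewrite -catA drop_size_cat // !prefix_prefix.
by rewrite drop_size_cat // prefix_catr // eqxx.
Qed.

Lemma size_flatten_lt (ss : seq (seq T)) s :
  1 < size ss -> all (fun t => 0 < size t) ss -> s \in ss ->
  size s < size (flatten ss).
Proof.
move=> ss2 /allP ss_pos /perm_to_rem ss_rem.
rewrite size_flatten (perm_sumn (perm_map size ss_rem)) /= -addn1 leq_add2l.
have := perm_size ss_rem; case: (rem s ss) (perm_mem ss_rem) => [|t ts] /= ss_t.
  by move=> eq_ss; rewrite eq_ss in ss2.
by move=> _; rewrite (leq_trans (ss_pos t _)) ?ss_t ?inE ?eqxx ?orbT ?leq_addr.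
Qed.

End SeqFacts.

Section TupleCount.
Variables (X : finType) (n : nat) (P : seq X -> Prop).

Lemma size_le_card_tuples (s : seq (seq X)) : uniq s ->
  (forall w : seq X, w \in s -> size w = n /\ P w) ->
  size s <= #|[set t : n.-tuple X | Defs.decP (P t)]|.
Proof.
move=> uniq_s s_P; rewrite cardE -(size_map val); apply: uniq_leq_size => // w w_s.
have [size_w Pw] := s_P w w_s; have size_w' : size w == n by rewrite size_w.
by apply/mapP; exists (Tuple size_w'); rewrite // mem_enum inE; apply/decPP.
Qed.

Lemma card_tuples_le_size (s : seq (seq X)) :
  (forall w : seq X, size w = n -> P w -> w \in s) ->
  #|[set t : n.-tuple X | Defs.decP (P t)]| <= size s.
Proof.
move=> P_s; rewrite cardE -(size_map val).
apply: uniq_leq_size => [|w /mapP[t]].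
  by rewrite map_inj_uniq ?enum_uniq //; exact: val_inj.
by rewrite mem_enum inE => /decPP Pt ->; apply: P_s; rewrite ?size_tuple.
Qed.

End TupleCount.

Section QuasiperiodicWords.
Variables (X : finType) (q : seq X).

Lemma QqP eta : Qq q eta <->
  forall j, j < size eta -> exists2 i, i <= j < i + size q & prefix q (drop i eta).
Proof.
split=> Qeta j lt_j.
  have [u [_ lt_ju le_uj]] := Qeta j lt_j; rewrite prefix_drop_cat => /andP[_ q_u].
  by exists (size u) => //; rewrite le_uj.
have [i /andP[le_ij lt_ji] q_i] := Qeta j lt_j.
have size_i : size (take i eta) = i by rewrite size_takel //; lia.
exists (take i eta); split; rewrite ?size_i ?prefix_take //.
by rewrite prefix_drop_cat prefix_take size_i.
Qed.

Lemma PqE v : Pq q v <-> [/\ 0 < size v, size v <= size q & prefix q (v ++ q)].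
Proof.
rewrite /Pq /pprefix prefix0s size_cat; split.
  by case=> v_gt0 v_q /andP[q_vq _]; split=> //; exact: size_prefix.
case=> v_gt0 le_vq q_vq; split=> //; last by rewrite q_vq; lia.
exact: prefix_size_prefix (prefix_prefix v q) q_vq le_vq.
Qed.

Definition star_lengths : seq nat :=
  [seq k <- iota 1 (size q) | Defs.decP (starroot q (take k q))].

Lemma mem_star_lengths k : k \in star_lengths ->
  [/\ 0 < k, k <= size q & starroot q (take k q)].
Proof. by rewrite mem_filter mem_iota => /andP[/decPP ? /andP[? ?]]; split=> //; lia. Qed.

(* The words of (star root of P_q)^*; an element of P_q is a prefix of q, so
   a factor is recorded by its length. *)
Inductive rootstar : seq X -> Prop :=
| rootstar_nil : rootstar [::]
| rootstar_cons k u : k \in star_lengths -> rootstar u -> rootstar (take k q ++ u).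

Lemma rootstar_cat u v : rootstar u -> rootstar v -> rootstar (u ++ v).
Proof. by elim=> // k u' ks _ IH Sv; rewrite -catA; exact: rootstar_cons (IH Sv). Qed.

Lemma rootstar_flatten vs : (forall v, v \in vs -> rootstar v) -> rootstar (flatten vs).
Proof.
elim: vs => [|v vs IH] Svs /=; first exact: rootstar_nil.
apply: rootstar_cat; first by apply: Svs; rewrite mem_head.
by apply: IH => w w_vs; apply/Svs/mem_behead.
Qed.

Lemma rootstar_period u : rootstar u -> prefix q (u ++ q).
Proof.
elim=> [|k {}u ks _ IH]; first exact: prefix_refl.
have [_ kq [/PqE[_ _ q_kq] _]] := mem_star_lengths ks.
have size_k : size (take k q) = k by rewrite size_takel.
rewrite -{1}(cat_take_drop k q) prefix_catr // eqxx /= in q_kq.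
by rewrite -{1}(cat_take_drop k q) -catA prefix_catr // eqxx (prefix_trans q_kq).
Qed.

Lemma Pq_rootstar v : Pq q v -> rootstar v.
Proof.
have [n] := ubnP (size v); elim: n v => // n IH v lt_vn Pv.
case: (decPP (Pq2star q v)) => [[vs [vs2 [Pvs eq_v]]] | notP2].
  rewrite {}eq_v in lt_vn *.
  apply: rootstar_flatten => w w_vs; apply: IH (Pvs w w_vs).
  suff : size w < size (flatten vs) by lia.
  by apply: size_flatten_lt => //; apply/allP => x /Pvs /PqE[].
have [v_gt0 le_vq _] := (PqE v).1 Pv.
have v_take : take (size v) q = v by case: Pv => _; rewrite prefixE => /eqP.
rewrite -[v]cats0 -v_take; apply: rootstar_cons rootstar_nil.
rewrite mem_filter mem_iota v_take; apply/andP; split; first exact/decPP.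
lia.
Qed.

Lemma rootstar_Qq u : rootstar u -> Qq q (u ++ q).
Proof.
move=> Su; apply/QqP; elim: Su => [|k {}u ks Su IH] j lt_j.
  by exists 0; rewrite ?drop0 ?prefix_refl //; lia.
have [_ kq _] := mem_star_lengths ks.
case: (ltnP j (size q)) => [lt_jq | le_qj].
  exists 0; first lia.
  by rewrite drop0 rootstar_period //; exact: rootstar_cons.
move: lt_j; rewrite -catA !size_cat size_takel // => lt_j.
have [|i /andP[le_ij lt_ji] q_i] := IH (j - k); first by rewrite size_cat; lia.
exists (k + i); first lia.
by rewrite addnC -drop_drop drop_size_cat ?size_takel.
Qed.

Lemma Qq_drop eta p : Qq q eta -> prefix q (drop p eta) ->
  (forall i, 0 < i < p -> ~~ prefix q (drop i eta)) -> Qq q (drop p eta).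
Proof.
move=> /QqP Qeta q_p p_min; apply/QqP => j; rewrite size_drop => lt_j.
have [|i /andP[le_ij lt_ji] q_i] := Qeta (p + j); first lia.
case: (leqP p i) => [le_pi | lt_ip].
  by exists (i - p); [lia | rewrite drop_drop subnK].
have i0 : i = 0.
  by case: (posnP i) => // i_gt0; move: q_i; rewrite (negbTE (p_min i _)) //; lia.
by exists 0; rewrite ?drop0 //; lia.
Qed.

Lemma Qq_rootstar eta : Qq q eta -> eta != [::] -> exists2 u, rootstar u & eta = u ++ q.
Proof.
have [n] := ubnP (size eta); elim: n eta => // n IH eta lt_eta Qeta eta_ne.
have /QqP Qeta_occ := Qeta.
have [|i0 /andP[le_i0 _] q_eta] := Qeta_occ 0; first by rewrite lt0n size_eq0.
rewrite leqn0 in le_i0; rewrite (eqP le_i0) drop0 in q_eta.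
case: (leqP (size eta) (size q)) => [le_eta_q | lt_q_eta].
  exists [::]; first exact: rootstar_nil.
  by move: q_eta; rewrite prefixE take_oversize // => /eqP.
have [i /andP[le_i lt_i] q_i] := Qeta_occ (size q) lt_q_eta.
have ex_p : exists p, (0 < p) && prefix q (drop p eta).
  by exists i; rewrite q_i andbT; lia.
have [p /andP[p_gt0 q_p] p_min] := find_ex_minn ex_p.
have le_pq : p <= size q by rewrite (leq_trans (p_min i _)) //; rewrite q_i andbT; lia.
have size_p : size (take p eta) = p by rewrite size_takel //; lia.
have Pv : Pq q (take p eta).
  apply/PqE; split; rewrite ?size_p //.
  apply: prefix_size_prefix q_eta _ _; last by rewrite size_cat; lia.
  by rewrite prefix_drop_cat prefix_take size_p.
have [|||u Su eq_u] := IH (drop p eta).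
- by rewrite size_drop; lia.
- apply: Qq_drop => // j /andP[j_gt0 lt_jp]; apply/negP => q_j.
  by have := p_min j; rewrite j_gt0 q_j => /(_ isT); lia.
- by apply/negP => /eqP eta_p; move: (size_prefix q_p); rewrite eta_p /=; lia.
exists (take p eta ++ u); first exact: rootstar_cat (Pq_rootstar Pv) Su.
by rewrite -catA -eq_u cat_take_drop.
Qed.

Lemma rootstar_cons_inj k k' u u' : k \in star_lengths -> k' \in star_lengths ->
  rootstar u -> rootstar u' -> take k q ++ u = take k' q ++ u' -> k = k'.
Proof.
wlog lt_kk' : k k' u u' / k < k'.
  move=> wlog_lt ks k's Su Su' eq_kk'.
  case: (ltngtP k k') => // lt; first exact: (wlog_lt k k' u u').
  exact/esym/(wlog_lt k' k u' u).
move=> ks k's Su Su' eq_kk'; exfalso.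
have [_ kq [Pk _]] := mem_star_lengths ks.
have [_ k'q [_ notP2]] := mem_star_lengths k's.
set v := drop k (take k' q).
have take_k' : take k' q = take k q ++ v.
  by rewrite -{1}(cat_take_drop k (take k' q)) take_takel // ltnW.
have size_v : size v = k' - k by rewrite size_drop size_takel.
have eq_u : u = v ++ u'.
  by have := congr1 (drop k) eq_kk'; rewrite take_k' -catA !drop_size_cat ?size_takel.
have Pv : Pq q v.
  apply/PqE; split; rewrite ?size_v; [lia | lia |].
  apply: prefix_size_prefix (rootstar_period Su) _ _; last by rewrite size_cat; lia.
  by rewrite eq_u -catA prefix_catr // eqxx rootstar_period.
apply: notP2; exists [:: take k q; v]; split=> //; split; last by rewrite /= cats0.
by move=> x; rewrite !inE => /orP[] /eqP ->.
Qed.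

Definition rootstar_words m : seq (seq X) :=
  [seq tval t | t <- enum [pred t : m.-tuple X | Defs.decP (rootstar t)]].

Lemma mem_rootstar_words m (u : seq X) : u \in rootstar_words m <-> rootstar u /\ size u = m.
Proof.
split=> [/mapP[t] | [Su size_u]].
  by rewrite mem_enum inE => /decPP Su ->; rewrite size_tuple.
have size_u' : size u == m by rewrite size_u.
by apply/mapP; exists (Tuple size_u'); rewrite // mem_enum inE; apply/decPP.
Qed.

Lemma rootstar_words_uniq m : uniq (rootstar_words m).
Proof. by rewrite map_inj_uniq ?enum_uniq //; exact: val_inj. Qed.

Lemma size_rootstar_words m : 0 < m ->
  size (rootstar_words m) = \sum_(k <- star_lengths | k <= m) size (rootstar_words (m - k)).
Proof.
move=> m_gt0.
pose ks := [seq k <- star_lengths | k <= m].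
pose s := [seq take k q ++ u | k <- ks, u <- rootstar_words (m - k)].
have mem_s (u : seq X) : u \in s <-> rootstar u /\ size u = m.
  split=> [/allpairsPdep[k [v [ks_k /mem_rootstar_words[Sv size_v] ->]]] | [Su size_u]].
    move: ks_k; rewrite mem_filter => /andP[km ks_k].
    have [_ kq _] := mem_star_lengths ks_k.
    by split; [exact: rootstar_cons | rewrite size_cat size_takel //; lia].
  case: Su m_gt0 size_u => [|k v ks_k Sv]; first by move=> + /= m0; rewrite -m0.
  have [k_gt0 kq _] := mem_star_lengths ks_k.
  rewrite size_cat size_takel // => _ size_kv.
  apply/allpairsPdep; exists k, v; split=> //; first by rewrite mem_filter ks_k andbT; lia.
  by apply/mem_rootstar_words; split=> //; lia.
have uniq_s : uniq s.
  apply: allpairs_uniq_dep => [|k _|]; rewrite ?filter_uniq ?iota_uniq ?rootstar_words_uniq //.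
  move=> p p' /allpairsPdep[k [v [ks_k /mem_rootstar_words[Sv _] ->]]].
  move=> /allpairsPdep[k' [v' [ks_k' /mem_rootstar_words[Sv' _] ->]]] /= eq_kv.
  have sub_ks := mem_subseq (filter_subseq (fun k => k <= m) star_lengths).
  have eq_k := rootstar_cons_inj (sub_ks _ ks_k) (sub_ks _ ks_k') Sv Sv' eq_kv; subst k'.
  by move: eq_kv => /(congr1 (drop (size (take k q)))); rewrite !drop_size_cat // => ->.
rewrite (perm_size (uniq_perm (rootstar_words_uniq m) uniq_s _)); last first.
  by move=> u; apply/idP/idP => [/mem_rootstar_words/mem_s | /mem_s/mem_rootstar_words].
by rewrite size_allpairs_dep sumnE big_map big_filter.
Qed.

Lemma size_rootstar_words0 : size (rootstar_words 0) = 1.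
Proof.
have mem0 (u : seq X) : u \in rootstar_words 0 = (u \in [:: [::]]).
  apply/idP/idP => [/mem_rootstar_words[_ /size0nil ->] | ]; first exact: mem_head.
  by rewrite inE => /eqP ->; apply/mem_rootstar_words; split=> //; exact: rootstar_nil.
by rewrite (perm_size (uniq_perm (rootstar_words_uniq 0) _ mem0)).
Qed.

Lemma rootstar_words_le_infix_count m n : m <= n <= m + size q ->
  size (rootstar_words m) <= infix_count q n.
Proof.
move=> /andP[le_mn le_n]; rewrite -(size_map (fun u : seq X => take n (u ++ q))).
apply: size_le_card_tuples => [|w /mapP[u /mem_rootstar_words[Su size_u] ->]].
  rewrite map_inj_in_uniq ?rootstar_words_uniq // => u v /mem_rootstar_words[_ size_u].
  move=> /mem_rootstar_words[_ size_v] /(congr1 (take m)).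
  by rewrite !take_takel // !take_size_cat.
split; first by rewrite size_takel // size_cat; lia.
by exists (u ++ q); split; [exact: rootstar_Qq | exact/prefixW/prefix_take].
Qed.

Lemma rootstar_drop u s : rootstar u -> s <= size u + size q ->
  exists d u', [/\ d <= size q, rootstar u' & drop s (u ++ q) = drop d (u' ++ q)].
Proof.
move=> Su; elim: Su s => [|k {}u ks Su IH] s le_s.
  by exists s, [::]; split=> //; exact: rootstar_nil.
have [_ kq _] := mem_star_lengths ks.
case: (ltnP s k) => [lt_sk | le_ks].
  by exists s, (take k q ++ u); split=> //; [lia | exact: rootstar_cons].
have [|d [u' [le_dq Su' eq_u']]] := IH (s - k).
  by move: le_s; rewrite size_cat size_takel //; lia.
by exists d, u'; split=> //; rewrite -catA drop_cat size_takel // ltnNge le_ks.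
Qed.

Lemma rootstar_take u m : rootstar u -> m <= size u + size q ->
  exists2 u', rootstar u' &
    [/\ m <= size u' + size q, size u' <= m & take m (u' ++ q) = take m (u ++ q)].
Proof.
move=> Su; elim: Su m => [|k {}u ks Su IH] m le_m.
  by exists [::]; [exact: rootstar_nil | split].
have [_ kq _] := mem_star_lengths ks.
have size_k : size (take k q) = k by rewrite size_takel.
case: (leqP m k) => [le_mk | lt_km].
  exists [::]; first exact: rootstar_nil.
  split=> //; first lia.
  by rewrite -catA [RHS]takel_cat ?size_k // take_takel.
have [|u' Su' [le_m' le_u'm eq_u']] := IH (m - k).
  by move: le_m; rewrite size_cat size_k; lia.
exists (take k q ++ u'); first exact: rootstar_cons.
rewrite size_cat size_k; split; [lia | lia |].
by rewrite -!catA take_cat [RHS]take_cat size_k ltnNge (ltnW lt_km) /= eq_u'.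
Qed.

Lemma infixQ_rootstar w : infixQ q w -> exists2 u, rootstar u & infix w (u ++ q).
Proof.
case=> eta [Qeta w_eta]; have [eta0 | eta_ne] := eqVneq eta [::].
  exists [::]; first exact: rootstar_nil.
  by rewrite eta0 infixs0 in w_eta; rewrite (eqP w_eta) infix0s.
by have [u Su eq_eta] := Qq_rootstar Qeta eta_ne; exists u; rewrite -?eq_eta.
Qed.

Lemma infixQ_window w : infixQ q w ->
  exists d u, [/\ d <= size q, rootstar u, size w + d <= size u + size q,
                  size u <= size w + d & w = take (size w) (drop d (u ++ q))].
Proof.
move=> /infixQ_rootstar[u Su w_u].
have [s [s' eq_u]] : exists s s' : seq X, u ++ q = s ++ w ++ s' := infixP w_u.
have size_uq := congr1 size eq_u; rewrite !size_cat in size_uq.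
have [|d [u' [le_dq Su' eq_drop]]] := rootstar_drop Su (s := size s); first lia.
have w_drop : w = take (size w) (drop d (u' ++ q)).
  by rewrite -eq_drop eq_u drop_size_cat // takel_cat // take_size.
have le_w : size w + d <= size u' + size q.
  by move: (congr1 size eq_drop); rewrite !size_drop !size_cat; lia.
have [u'' Su'' [le1 le2 eq_take]] := rootstar_take Su' le_w.
exists d, u''; split=> //.
by rewrite {1}w_drop !take_drop eq_take.
Qed.

Definition infix_candidates n : seq (seq X) :=
  [seq take n (drop d (u ++ q)) | d <- iota 0 (size q).+1,
     u <- flatten [seq rootstar_words l | l <- index_iota (n + d - size q) (n + d).+1]].

Lemma infix_count_le_candidates n : infix_count q n <= size (infix_candidates n).
Proof.
apply: card_tuples_le_size => w size_w /infixQ_window[d [u [le_dq Su le1 le2 eq_w]]].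
apply/allpairsPdep; exists d, u; split.
- by rewrite mem_iota; lia.
- apply/flatten_mapP; exists (size u); first by rewrite mem_index_iota; lia.
  exact/mem_rootstar_words.
- by rewrite -size_w.
Qed.

Lemma size_infix_candidates n : size (infix_candidates n) =
  \sum_(0 <= d < (size q).+1) \sum_(n + d - size q <= l < (n + d).+1) size (rootstar_words l).
Proof.
rewrite size_allpairs_dep sumnE big_map; apply: eq_bigr => d _.
by rewrite size_flatten sumnE !big_map.
Qed.
End QuasiperiodicWords.

Local Open Scope ring_scope.

Section Renewal.
Variables (R : realFieldType) (K : seq nat) (a : nat -> R) (lam : R).
Hypothesis K_gt0 : forall k, k \in K -> (0 < k)%N.
Hypothesis lam_gt0 : 0 < lam.
Hypothesis sum_K : \sum_(k <- K) lam ^- k = 1.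

Lemma renewal_root_ge1 : 1 <= lam.
Proof.
rewrite leNgt; apply/negP => lt_lam1; move: K_gt0 sum_K.
case: K => [_ | k ks K_gt0']; first by rewrite big_nil => /eqP; rewrite eq_sym oner_eq0.
have lam_k : 1 < lam ^- k.
  by rewrite invf_gt1 ?exprn_gt0 // exprn_ilt1 ?ltW // -lt0n K_gt0' ?mem_head.
rewrite big_cons => /eqP; apply/negP; rewrite gt_eqF // (lt_le_trans lam_k) // lerDl.
by rewrite sumr_ge0 // => i _; rewrite invr_ge0 exprn_ge0 // ltW.
Qed.

Hypothesis a0 : a 0 = 1.
Hypothesis a_rec : forall m, (0 < m)%N -> a m = \sum_(k <- K | (k <= m)%N) a (m - k).

Lemma renewal_le_expr m : a m <= lam ^+ m.
Proof.
elim/ltn_ind: m => m IH; case: (posnP m) => [-> | m_gt0]; first by rewrite a0 expr0.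
rewrite a_rec // (@le_trans _ _ (\sum_(k <- K | (k <= m)%N) lam ^+ m * lam ^- k)) //.
  rewrite big_seq_cond [leRHS]big_seq_cond; apply: ler_sum => k /andP[kK km].
  rewrite -exprB ?unitfE ?gt_eqF //; apply: IH; have := K_gt0 kK; lia.
rewrite -mulr_sumr -[leRHS]mulr1 -sum_K ler_pM2l ?exprn_gt0 //.
rewrite [leRHS](bigID (fun k => (k <= m)%N)) /= lerDl sumr_ge0 // => k _.
by rewrite invr_ge0 exprn_ge0 // ltW.
Qed.

Hypothesis a_ge0 : forall m, 0 <= a m.

(* The sum of a_i / lam^i over t - k < i <= t (truncated subtraction starts
   the range at 0 when k > t). *)
Definition renewal_window t k := \sum_(t.+1 - k <= i < t.+1) a i / lam ^+ i.

Lemma renewal_window_succ t k : (0 < k)%N ->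
  renewal_window t.+1 k = renewal_window t k + a t.+1 / lam ^+ t.+1
    - (if (k <= t.+1)%N then a (t.+1 - k) / lam ^+ (t.+1 - k) else 0).
Proof.
move=> k_gt0; rewrite /renewal_window big_nat_recr /=; last lia.
case: (leqP k t.+1) => [le_k | lt_k].
  rewrite [in RHS]big_ltn; last lia.
  rewrite (_ : t.+2 - k = (t.+1 - k).+1)%N; last lia.
  by ring.
by rewrite (_ : t.+2 - k = t.+1 - k)%N ?subr0 //; lia.
Qed.

Lemma renewal_window_invariant t : \sum_(k <- K) lam ^- k * renewal_window t k = 1.
Proof.
elim: t => [|t IH].
  rewrite -[RHS]sum_K big_seq [RHS]big_seq; apply: eq_bigr => k kK.
  rewrite /renewal_window (_ : 1 - k = 0)%N; last by have := K_gt0 kK; lia.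
  by rewrite big_nat1 a0 expr0 divr1 mulr1.
have step_K : \sum_(k <- K) lam ^- k *
    (if (k <= t.+1)%N then a (t.+1 - k) / lam ^+ (t.+1 - k) else 0) = a t.+1 / lam ^+ t.+1.
  rewrite a_rec // mulr_suml [RHS]big_mkcond; apply: eq_big_seq => k kK.
  case: ifP => [le_k | _]; last by rewrite mulr0 ?mul0r.
  have -> : lam ^+ t.+1 = lam ^+ (t.+1 - k) * lam ^+ k by rewrite -exprD subnK.
  by rewrite invfM; ring.
rewrite -[RHS]IH.
under eq_big_seq => k kK do rewrite renewal_window_succ ?K_gt0 // mulrBr mulrDr.
by rewrite sumrB big_split /= -mulr_suml sum_K mul1r step_K addrK.
Qed.

Lemma renewal_window_ge1 L t : (forall k, k \in K -> (k <= L)%N) -> 1 <= renewal_window t L.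
Proof.
move=> K_le; rewrite -(renewal_window_invariant t) -[leRHS]mul1r -sum_K mulr_suml.
rewrite big_seq [leRHS]big_seq; apply: ler_sum => k kK.
apply: ler_wpM2l; first by rewrite invr_ge0 exprn_ge0 // ltW.
have kL := K_le k kK; rewrite /renewal_window [leRHS](@big_cat_nat _ _ _ (t.+1 - k)) /=; [|lia|lia].
by rewrite lerDr sumr_ge0 // => i _; rewrite divr_ge0 ?a_ge0 ?exprn_ge0 ?ltW.
Qed.

End Renewal.

Lemma root_pq_sum (R : fieldType) (X : finType) (q : seq X) (lam : R) :
  lam != 0 -> root (pq R q) lam -> \sum_(k <- star_lengths q) lam ^- k = 1.
Proof.
move=> lam_neq0; rewrite /root /pq !hornerE horner_sum subr_eq0 => /eqP.
under eq_bigr => i _ do rewrite hornerXn.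
rewrite -(big_mkord (fun k => Defs.decP (starroot q (take k q)))
                    (fun k => lam ^+ (size q - k))).
have not_root0 : Defs.decP (starroot q (take 0 q)) = false.
  by apply/decPP; rewrite take0 => -[/PqE[]].
rewrite /index_iota subn0 /= big_cons not_root0 -big_filter -/(star_lengths q).
have lam_q_neq0 : lam ^+ size q != 0 by rewrite expf_neq0.
move=> eq_sum; apply: (mulfI lam_q_neq0); rewrite mulr1 {2}eq_sum mulr_sumr.
apply: eq_big_seq => k /mem_star_lengths[_ kq _].
by rewrite exprB ?unitfE.
Qed.

Section InfixGrowth.
Variables (R : realFieldType) (X : finType) (q : seq X) (lam : R).
Hypothesis lam_gt0 : 0 < lam.
Hypothesis sum_lam : \sum_(k <- star_lengths q) lam ^- k = 1.

Let a m : R := (size (rootstar_words q m))%:R.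

Let star_lengths_gt0 k : k \in star_lengths q -> (0 < k)%N.
Proof. by case/mem_star_lengths. Qed.

Let a0 : a 0 = 1.
Proof. by rewrite /a size_rootstar_words0. Qed.

Let a_rec m : (0 < m)%N -> a m = \sum_(k <- star_lengths q | (k <= m)%N) a (m - k).
Proof. by move=> m_gt0; rewrite /a size_rootstar_words // natr_sum. Qed.

Let a_ge0 m : 0 <= a m.
Proof. exact: ler0n. Qed.

Let lam_ge1 : 1 <= lam.
Proof. exact: renewal_root_ge1 star_lengths_gt0 lam_gt0 sum_lam. Qed.

Lemma infix_count_lower n : lam ^+ n <= (size q)%:R * lam ^+ size q * (infix_count q n)%:R.
Proof.
set c : R := (infix_count q n)%:R.
have window_ge1 : 1 <= renewal_window a lam n (size q).
  apply: (renewal_window_ge1 star_lengths_gt0 lam_gt0 sum_lam a0 a_rec a_ge0).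
  by move=> k /mem_star_lengths[].
have term_le i : (n.+1 - size q <= i < n.+1)%N ->
    a i / lam ^+ i <= c * (lam ^+ size q / lam ^+ n).
  move=> /andP[le_i lt_i]; apply: ler_pM.
  - exact: a_ge0.
  - by rewrite invr_ge0 exprn_ge0 // ltW.
  - by rewrite /a /c ler_nat rootstar_words_le_infix_count //; lia.
  rewrite ler_pdivlMr ?exprn_gt0 // mulrC ler_pdivrMr ?exprn_gt0 // -exprD.
  by rewrite ler_weXn2l //; lia.
have := le_trans window_ge1 (ler_sum_nat term_le); rewrite sumr_const_nat => le1.
have {le1} : 1 <= c * (lam ^+ size q / lam ^+ n) *+ size q.
  apply: le_trans le1 _; apply: ler_wpMn2l; last lia.
  by rewrite mulr_ge0 ?ler0n // divr_ge0 // exprn_ge0 // ltW.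
rewrite -mulr_natl !mulrA ler_pdivlMr ?exprn_gt0 // mul1r => le1.
by rewrite mulrAC.
Qed.

Lemma infix_count_upper n :
  (infix_count q n)%:R <= ((size q).+1 ^ 2)%:R * lam ^+ size q * lam ^+ n.
Proof.
apply: le_trans (_ : (size (infix_candidates q n))%:R <= _).
  by rewrite ler_nat infix_count_le_candidates.
rewrite size_infix_candidates natr_sum.
apply: le_trans (_ : \sum_(0 <= d < (size q).+1) lam ^+ (n + size q) *+ (size q).+1 <= _).
  apply: ler_sum_nat => d /andP[_ lt_d]; rewrite natr_sum.
  apply: le_trans (_ : \sum_(n + d - size q <= l < (n + d).+1) lam ^+ (n + size q) <= _).
    apply: ler_sum_nat => l /andP[_ lt_l].
    apply: le_trans (renewal_le_expr star_lengths_gt0 lam_gt0 sum_lam a0 a_rec l) _.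
    by rewrite ler_weXn2l //; lia.
  by rewrite sumr_const_nat ler_wpMn2l ?exprn_ge0 ?ltW //; lia.
by rewrite sumr_const_nat subn0 -mulrnA mulnn -[leLHS]mulr_natl exprD [leRHS]mulrAC -mulrA.
Qed.

End InfixGrowth.

Theorem lemma3 (X : finType) (hX : (1 < #|X|)%N) (q : seq X) (hq : q != [::])
    (R : rcfType) (lam : R) (hlam : largest_pos_root (pq R q) lam) :
  exists c1 c2 : R, [/\ 0 < c1, 0 < c2 &
    forall n : nat, c1 * lam ^+ n <= (infix_count q n)%:R <= c2 * lam ^+ n].
Proof.
case: hlam => lam_gt0 root_lam _.
have sum_lam := root_pq_sum (lt0r_neq0 lam_gt0) root_lam.
have q_gt0 : (0 < size q)%N by rewrite lt0n size_eq0.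
exists ((size q)%:R * lam ^+ size q)^-1, (((size q).+1 ^ 2)%:R * lam ^+ size q).
have c_gt0 : 0 < (size q)%:R * lam ^+ size q by rewrite mulr_gt0 ?exprn_gt0 ?ltr0n.
split=> [|| n]; first by rewrite invr_gt0.
  by rewrite mulr_gt0 ?exprn_gt0 ?ltr0n.
by rewrite infix_count_upper // andbT ler_pdivrMl // infix_count_lower.
Qed.
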